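(* Let $m,n\ge 1$ and let $\mathcal L:\mathbb R^{m\times n}\to\mathbb R$ be differentiable and attain its minimum, and assume there is $L>0$ such that $\|\nabla\mathcal L(\Theta)-\nabla\mathcal L(\Theta')\|_*\le L\|\Theta-\Theta'\|_2$ for all $\Theta,\Theta'\in\mathbb R^{m\times n}$. Let $\{\Theta_t\}$ be generated by the AdaGO algorithm (described in the context) using the full batch, i.e. $G_t=\nabla\mathcal L(\Theta_{t-1})$ for all $t$, and momentum $\mu=0$. Write $\Delta:=\mathcal L(\Theta_0)-\min_\Theta\mathcal L(\Theta)$. Fix any $q>0$ and, for a horizon $T$, choose $\epsilon=T^{-1/2}$ and $\eta=T^{-q}$. Then, for all sufficiently large $T$, \[ \frac1T\sum_{t=1}^T\mathbb E\big[\|\nabla\mathcal L(\Theta_{t-1})\|_*\big]\le \mathcal O\!\left(\frac{\Delta+L}{\sqrt T}\right). \]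
   Context: $\|\cdot\|_*$ is the nuclear norm, $\|\cdot\|_2$ the spectral norm, $\|\cdot\|_F$ the Frobenius norm, and $\|\cdot\|$ denotes a fixed matrix norm (e.g. Frobenius) used in the stepsize. For $M\in\mathbb R^{m\times n}$, $\mathrm{Orth}(M):=\arg\min_{O\in\mathbb R^{m\times n}}\{\|O-M\|_F: OO^T=I_m\text{ or }O^TO=I_n\}$; equivalently, if $M=U\Sigma V^T$ is a reduced SVD then $\mathrm{Orth}(M)=UV^T$. AdaGO algorithm: inputs are a learning rate $\eta>0$, momentum $\mu\in[0,1)$, constants $\gamma>0$, $\epsilon>0$. Initialize $\Theta_0\in\mathbb R^{m\times n}$, $M_0=0$, $v_0>0$. For $t=1,\dots,T$: compute the gradient $G_t$ at $\Theta_{t-1}$; set $M_t=\mu M_{t-1}+(1-\mu)G_t$; $v_t^2=v_{t-1}^2+\min\{\|G_t\|^2,\gamma^2\}$; $O_t=\mathrm{Orth}(M_t)$; $\Theta_t=\Theta_{t-1}-\max\{\epsilon,\ \eta\,\min\{\|G_t\|,\gamma\}/v_t\}\,O_t$. The $\mathcal O(\cdot)$ hides an absolute constant. *)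

From HB Require Import structures.
From mathcomp Require Import all_boot all_order all_algebra.
From mathcomp Require Import all_classical all_reals all_analysis.
Set Implicit Arguments. Unset Strict Implicit. Unset Printing Implicit Defensive.
Import Order.TTheory GRing.Theory Num.Theory.
Import numFieldNormedType.Exports.
Local Open Scope classical_set_scope.
Local Open Scope ring_scope.

Section Defs.
Variable R : realType.

Definition frob {m n : nat} (A : 'M[R]_(m, n)) : R :=
  Num.sqrt (\sum_(i < m) \sum_(j < n) A i j ^+ 2).

Definition mxdot {m n : nat} (A B : 'M[R]_(m, n)) : R :=
  \sum_(i < m) \sum_(j < n) A i j * B i j.

Definition spec_norm {m n : nat} (A : 'M[R]_(m, n)) : R :=
  sup [set frob (A *m x) | x in [set x : 'cV[R]_n | frob x = 1]].

(* nuclear norm = trace norm, defined as the dual norm of the spectral norm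
   (equal to the sum of singular values) *)
Definition nuc_norm {m n : nat} (A : 'M[R]_(m, n)) : R :=
  sup [set mxdot O A | O in [set O : 'M[R]_(m, n) | spec_norm O <= 1]].

Definition semi_orth {m n : nat} (O : 'M[R]_(m, n)) : Prop :=
  O *m O^T = 1%:M \/ O^T *m O = 1%:M.

Definition is_orth {m n : nat} (M O : 'M[R]_(m, n)) : Prop :=
  semi_orth O /\ forall O', semi_orth O' -> frob (O - M) <= frob (O' - M).

Definition grad {m n : nat} (f : 'M[R]_(m, n) -> R) (X : 'M[R]_(m, n))
  : 'M[R]_(m, n) := \matrix_(i, j) ('D_(delta_mx i j) f X).

(* A run of AdaGO with full-batch gradients G_t = grad f (Theta_{t-1}),
   stepsize norm ||.|| = Frobenius norm.  Indexing: Theta t = Θ_t, M t = M_t,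
   v t = v_t, O t = O_t (O 0 unused). *)
Definition adago_run {m n : nat} (f : 'M[R]_(m, n) -> R)
  (eta mu gamma eps : R) (Theta0 : 'M[R]_(m, n)) (v0 : R)
  (Theta M O : nat -> 'M[R]_(m, n)) (v : nat -> R) : Prop :=
  [/\ Theta 0%N = Theta0, M 0%N = 0, v 0%N = v0 &
   forall t : nat,
     let G := grad f (Theta t) in
     [/\ M t.+1 = mu *: M t + (1 - mu) *: G,
         v t.+1 = Num.sqrt (v t ^+ 2 + Num.min (frob G ^+ 2) (gamma ^+ 2)),
         is_orth (M t.+1) (O t.+1) &
         Theta t.+1 = Theta t
           - Num.max eps (eta * Num.min (frob G) gamma / v t.+1) *: O t.+1]].

End Defs.

(* With full-batch gradients and mu = 0, O_t is an orthogonal polar factor of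
   G_t = grad L(Theta_(t-1)), and such a factor maximizes <O, G_t> over the
   spectral-norm unit ball, so <O_t, G_t> = ||G_t||_*.  This is proved without the
   SVD: maximality of O_t among semi-orthogonal matrices, tested against products
   of Householder reflections, makes O_t G_t^T symmetric positive semidefinite,
   hence a sum of rank-one terms w w^T, and G_t = O_t G_t^T O_t; on each term
   w w^T O_t no spectral contraction does better than O_t.

   The mean value theorem and the nuclear/spectral Lipschitz bound then give
   L(Theta_t) <= L(Theta_(t-1)) - a_t ||G_t||_* + L a_t^2 for the stepsize a_t >= eps.
   Summing, eps sum_t ||G_t||_* <= Delta + L sum_t a_t^2, and
   a_t^2 <= eps^2 + eta^2 (v_t^2 - v_(t-1)^2) / v_t^2 bounds sum_t a_t^2 by
   T eps^2 + eta^2 ln (T (1 + gamma^2 / v_0^2)) = 1 + T^(-2q) O(ln T) <= 2.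
   With eps = T^(-1/2) this is (1/T) sum_t ||G_t||_* <= (Delta + 2 L) / sqrt T. *)

From HB Require Import structures.
From mathcomp Require Import all_boot all_order all_algebra.
From mathcomp Require Import all_classical all_reals all_analysis.
From mathcomp Require Import ring lra.
Import Order.TTheory GRing.Theory Num.Theory.
Import numFieldNormedType.Exports.
Local Open Scope ring_scope.
Set Implicit Arguments. Unset Strict Implicit. Unset Printing Implicit Defensive.

Section FrobeniusProduct.
Variable R : realType.
Implicit Types m n k : nat.

Lemma mxdotE m n (A B : 'M[R]_(m, n)) : mxdot A B = \tr (A *m B^T).
Proof.
rewrite /mxdot /mxtrace; apply: eq_bigr => i _; rewrite mxE.
by apply: eq_bigr => j _; rewrite mxE.
Qed.

Lemma mxdotC m n (A B : 'M[R]_(m, n)) : mxdot A B = mxdot B A.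
Proof. by apply: eq_bigr => i _; apply: eq_bigr => j _; rewrite mulrC. Qed.

Lemma mxdotDl m n (A B C : 'M[R]_(m, n)) :
  mxdot (A + B) C = mxdot A C + mxdot B C.
Proof. by rewrite !mxdotE mulmxDl mxtraceD. Qed.

Lemma mxdotZl m n a (A C : 'M[R]_(m, n)) : mxdot (a *: A) C = a * mxdot A C.
Proof. by rewrite !mxdotE -scalemxAl mxtraceZ. Qed.

Lemma mxdotNl m n (A C : 'M[R]_(m, n)) : mxdot (- A) C = - mxdot A C.
Proof. by rewrite -scaleN1r mxdotZl mulN1r. Qed.

Lemma mxdotBl m n (A B C : 'M[R]_(m, n)) :
  mxdot (A - B) C = mxdot A C - mxdot B C.
Proof. by rewrite mxdotDl mxdotNl. Qed.

Lemma mxdot0l m n (C : 'M[R]_(m, n)) : mxdot 0 C = 0.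
Proof. by rewrite mxdotE mul0mx mxtrace0. Qed.

Lemma mxdotDr m n (A B C : 'M[R]_(m, n)) :
  mxdot C (A + B) = mxdot C A + mxdot C B.
Proof. by rewrite !(mxdotC C) mxdotDl. Qed.

Lemma mxdotZr m n a (A C : 'M[R]_(m, n)) : mxdot C (a *: A) = a * mxdot C A.
Proof. by rewrite !(mxdotC C) mxdotZl. Qed.

Lemma mxdotNr m n (A C : 'M[R]_(m, n)) : mxdot C (- A) = - mxdot C A.
Proof. by rewrite !(mxdotC C) mxdotNl. Qed.

Lemma mxdotBr m n (A B C : 'M[R]_(m, n)) :
  mxdot C (A - B) = mxdot C A - mxdot C B.
Proof. by rewrite !(mxdotC C) mxdotBl. Qed.

Lemma mxdot0r m n (C : 'M[R]_(m, n)) : mxdot C 0 = 0.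
Proof. by rewrite mxdotC mxdot0l. Qed.

Lemma mxdot_ge0 m n (A : 'M[R]_(m, n)) : 0 <= mxdot A A.
Proof. by rewrite sumr_ge0 // => i _; rewrite sumr_ge0 // => j _; rewrite -expr2 sqr_ge0. Qed.

Lemma mxdot_eq0 m n (A : 'M[R]_(m, n)) : mxdot A A = 0 -> A = 0.
Proof.
have AA_ge0 i j : 0 <= A i j * A i j by rewrite -expr2 sqr_ge0.
move/psumr_eq0P => rows0; apply/matrixP => i j; rewrite mxE.
have /psumr_eq0P/(_ j isT) : \sum_j A i j * A i j = 0.
  by apply: rows0 => // i' _; exact: sumr_ge0.
by move=> /(_ (fun j _ => AA_ge0 i j)) /eqP; rewrite mulf_eq0 orbb => /eqP.
Qed.

Lemma frobE m n (A : 'M[R]_(m, n)) : frob A = Num.sqrt (mxdot A A).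
Proof. by congr Num.sqrt; apply: eq_bigr => i _; apply: eq_bigr => j _. Qed.

Lemma frob_ge0 m n (A : 'M[R]_(m, n)) : 0 <= frob A.
Proof. exact: sqrtr_ge0. Qed.

Lemma frob_sqr m n (A : 'M[R]_(m, n)) : frob A ^+ 2 = mxdot A A.
Proof. by rewrite frobE sqr_sqrtr ?mxdot_ge0. Qed.

Lemma frob_le m n (A : 'M[R]_(m, n)) c :
  0 <= c -> (frob A <= c) = (mxdot A A <= c ^+ 2).
Proof. by move=> c_ge0; rewrite -frob_sqr ler_sqr ?nnegrE ?frob_ge0. Qed.

Lemma mxdot_trmx m n (A B : 'M[R]_(m, n)) : mxdot A^T B^T = mxdot A B.
Proof. by rewrite !mxdotE trmxK -mxtrace_tr trmx_mul trmxK mxtrace_mulC. Qed.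

Lemma mxdot_mulmxl m n p (A : 'M[R]_(m, n)) (x : 'M[R]_(n, p)) y :
  mxdot (A *m x) y = mxdot x (A^T *m y).
Proof. by rewrite !mxdotE trmx_mul trmxK -mulmxA mxtrace_mulC -mulmxA. Qed.

Lemma mxdot_outer m n (A : 'M[R]_(m, n)) (w : 'cV[R]_m) (z : 'cV[R]_n) :
  mxdot A (w *m z^T) = mxdot (A *m z) w.
Proof. by rewrite !mxdotE trmx_mul trmxK mulmxA. Qed.

Lemma trmx_mul_col k (v w : 'cV[R]_k) : v^T *m w = (mxdot v w)%:M.
Proof.
apply/matrixP => a b; rewrite !ord1 !mxE.
by apply: eq_bigr => i _; rewrite big_ord1 !mxE.
Qed.

Lemma mxdot_col_sqr k (x : 'cV[R]_k) : mxdot x x = \sum_(i < k) x i 0 ^+ 2.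
Proof. by apply: eq_bigr => i _; rewrite big_ord1 expr2. Qed.

Lemma mxdot_delta k (a : 'I_k) (w : 'cV[R]_k) : mxdot (delta_mx a 0) w = w a 0.
Proof.
rewrite /mxdot (bigD1 a) //= big_ord1 mxE !eqxx mul1r big1 ?addr0 //.
by move=> i /negbTE ia; rewrite big_ord1 mxE ia mul0r.
Qed.

Lemma mxdot_delta_mulmx k (X : 'M[R]_k) (a b : 'I_k) :
  mxdot (delta_mx a 0 : 'cV[R]_k) (X *m delta_mx b 0) = X a b.
Proof. by rewrite mxdot_delta -colE mxE. Qed.

Lemma mxdot_delta2 k (a b : 'I_k) :
  mxdot (delta_mx a 0 : 'cV[R]_k) (delta_mx b 0) = (a == b)%:R.
Proof. by rewrite mxdot_delta mxE eqxx andbT. Qed.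

Lemma mxdot_cauchy_schwarz m n (A B : 'M[R]_(m, n)) :
  mxdot A B ^+ 2 <= mxdot A A * mxdot B B.
Proof.
have [/mxdot_eq0 ->|nzB] := eqVneq (mxdot B B) 0.
  by rewrite !mxdot0r expr0n mulr0.
have := mxdot_ge0 (mxdot B B *: A - mxdot A B *: B).
rewrite !(mxdotBl, mxdotBr, mxdotZl, mxdotZr) (mxdotC B A).
have -> : mxdot B B * (mxdot B B * mxdot A A - mxdot A B * mxdot A B) -
    mxdot A B * (mxdot B B * mxdot A B - mxdot A B * mxdot B B) =
    mxdot B B * (mxdot A A * mxdot B B - mxdot A B ^+ 2) by ring.
by rewrite pmulr_rge0 ?subr_ge0 // lt_neqAle eq_sym nzB mxdot_ge0.
Qed.

Lemma mxdot_le_of_norm_le m n (A B : 'M[R]_(m, n)) :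
  mxdot A A <= mxdot B B -> mxdot A B <= mxdot B B.
Proof.
move=> AB; have := mxdot_cauchy_schwarz A B.
have := mxdot_ge0 A; have := mxdot_ge0 B.
move: AB; generalize (mxdot A A) (mxdot B B) (mxdot A B) => a b c; nra.
Qed.

End FrobeniusProduct.

Lemma eq0_of_linear_le_quadratic (R : realFieldType) (r a : R) :
  (forall s, s * r <= s ^+ 2 * a) -> r = 0.
Proof.
move=> lin_le; set b := `|a| + 1.
have b_gt0 : 0 < b by rewrite ltr_wpDl.
have : r / b * r * b ^+ 2 <= (r / b) ^+ 2 * a * b ^+ 2 by rewrite ler_pM2r ?exprn_gt0.
have -> : r / b * r * b ^+ 2 = r ^+ 2 * b by field; rewrite gt_eqF.
have -> : (r / b) ^+ 2 * a * b ^+ 2 = r ^+ 2 * a by field; rewrite gt_eqF.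
have a_le : a <= b - 1 by rewrite addrK ler_norm.
move=> rb_le; apply/eqP; rewrite -sqrf_eq0 eq_le sqr_ge0 andbT.
have := sqr_ge0 r; nra.
Qed.

Section TraceMaximal.
Variables (R : realType) (k : nat).
Implicit Types (u v w : 'cV[R]_k) (X : 'M[R]_k).

Definition psdmx X := forall u, 0 <= mxdot u (X *m u).

Definition householder u : 'M[R]_k := 1%:M - (2 / mxdot u u) *: (u *m u^T).

Lemma householder_orth u :
  mxdot u u != 0 -> householder u *m (householder u)^T = 1%:M.
Proof.
move=> uu_neq0; have trH : (householder u)^T = householder u.
  by rewrite /householder linearB linearZ /= trmx1 trmx_mul trmxK.
have UU : (u *m u^T) *m (u *m u^T) = mxdot u u *: (u *m u^T).
  by rewrite mulmxA -(mulmxA u) trmx_mul_col mul_mx_scalar -scalemxAl.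
rewrite trH /householder mulmxBl mul1mx mulmxBr mulmx1 -scalemxAr -scalemxAl.
rewrite UU !scalerA.
have -> : 2 / mxdot u u * (2 / mxdot u u) * mxdot u u = 2 / mxdot u u + 2 / mxdot u u.
  by field.
by rewrite scalerDl opprB addrK subrK.
Qed.

Lemma householder_mulmx u X w :
  householder u *m X *m w = X *m w - (2 / mxdot u u * mxdot u (X *m w)) *: u.
Proof.
rewrite /householder mulmxBl mul1mx mulmxBl -!scalemxAl -!mulmxA.
by rewrite trmx_mul_col mul_mx_scalar scalerA.
Qed.

Lemma mxtrace_householder u X :
  \tr (householder u *m X) = \tr X - 2 / mxdot u u * mxdot u (X *m u).
Proof.
rewrite /householder mulmxBl mul1mx raddfB /= -scalemxAl mxtraceZ.
by rewrite -mulmxA mxtrace_mulC -mulmxA trmx_mul_col mxtrace_scalar.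
Qed.

Lemma mxdot_delta_shift (i j : 'I_k) s : i != j ->
  mxdot (delta_mx i 0 + s *: delta_mx j 0 : 'cV[R]_k) (delta_mx i 0 + s *: delta_mx j 0)
  = 1 + s ^+ 2.
Proof.
move=> ij; rewrite mxdotDl !mxdotDr !mxdotZl !mxdotZr !mxdot_delta2 eqxx (negbTE ij).
by rewrite eq_sym (negbTE ij) eqxx /=; ring.
Qed.

Lemma mxtrace_householder2 X (i j : 'I_k) s : i != j ->
  \tr (householder (delta_mx i 0)
         *m householder (delta_mx i 0 + s *: delta_mx j 0) *m X) - \tr X =
  2 / (1 + s ^+ 2) * (s * (X j i - X i j) - s ^+ 2 * (X i i + X j j)).
Proof.
move=> ij; set u : 'cV[R]_k := delta_mx i 0; set v := u + s *: delta_mx j 0.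
have uu : mxdot u u = 1 by rewrite mxdot_delta2 eqxx.
have uv : mxdot u v = 1.
  by rewrite mxdotDr mxdotZr !mxdot_delta2 eqxx (negbTE ij) mulr0 addr0.
have Xvv : mxdot v (X *m v) = X i i + s * X i j + s * X j i + s ^+ 2 * X j j.
  rewrite /v mulmxDr -scalemxAr !mxdotDl !mxdotDr !mxdotZl !mxdotZr.
  by rewrite !mxdot_delta_mulmx; ring.
have Xvu : mxdot v (X *m u) = X i i + s * X j i.
  by rewrite /v !mxdotDl !mxdotZl !mxdot_delta_mulmx.
have p_gt0 : 0 < 1 + s ^+ 2 by rewrite ltr_pwDl ?sqr_ge0.
rewrite -mulmxA !mxtrace_householder householder_mulmx mxdotBr mxdotZr.
rewrite uv mulr1 uu mxdot_delta_shift // Xvv Xvu mxdot_delta_mulmx.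
by field; rewrite gt_eqF.
Qed.

Variable X : 'M[R]_k.
Hypothesis trace_max : forall Q : 'M[R]_k, Q *m Q^T = 1%:M -> \tr (Q *m X) <= \tr X.

Lemma trace_max_psd : psdmx X.
Proof.
move=> u; have [/mxdot_eq0 ->|uu_neq0] := eqVneq (mxdot u u) 0.
  by rewrite mxdot0l.
have := trace_max (householder_orth uu_neq0).
rewrite mxtrace_householder gerDl oppr_le0 pmulr_rge0 //.
by rewrite divr_gt0 // lt_neqAle eq_sym uu_neq0 mxdot_ge0.
Qed.

Lemma trace_max_sym : X^T = X.
Proof.
apply/matrixP => i j; rewrite mxE; have [->//|ij] := eqVneq i j.
apply/eqP; rewrite -subr_eq0; apply/eqP.
apply: (@eq0_of_linear_le_quadratic _ _ (X i i + X j j)) => s.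
have orthM (P Q : 'M[R]_k) :
    P *m P^T = 1%:M -> Q *m Q^T = 1%:M -> (P *m Q) *m (P *m Q)^T = 1%:M.
  by move=> PP QQ; rewrite trmx_mul mulmxA -(mulmxA P) QQ mulmx1 PP.
have p_gt0 : 0 < 1 + s ^+ 2 by rewrite ltr_pwDl ?sqr_ge0.
have uu : mxdot (delta_mx i 0 : 'cV[R]_k) (delta_mx i 0) != 0.
  by rewrite mxdot_delta2 eqxx oner_eq0.
have vv : mxdot (delta_mx i 0 + s *: delta_mx j 0 : 'cV[R]_k)
    (delta_mx i 0 + s *: delta_mx j 0) != 0.
  by rewrite mxdot_delta_shift // gt_eqF.
have := trace_max (orthM _ _ (householder_orth uu) (householder_orth vv)).
by rewrite -subr_le0 mxtrace_householder2 // pmulr_rle0 ?divr_gt0 // subr_le0.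
Qed.

End TraceMaximal.

Section PsdOuterSum.
Variables (R : realType) (k : nat).
Implicit Types (S : 'M[R]_k).

Lemma psdmx_diag0 S (i b : 'I_k) : psdmx S -> S i i = 0 -> S i b + S b i = 0.
Proof.
move=> S_psd Sii0; apply: (@eq0_of_linear_le_quadratic _ _ (S b b)) => t.
have := S_psd (delta_mx i 0 - t *: delta_mx b 0).
rewrite mulmxBr -scalemxAr !mxdotBl !mxdotBr !mxdotZl !mxdotZr.
by rewrite !mxdot_delta_mulmx Sii0 => ?; lra.
Qed.

Definition pivot_col S (i : 'I_k) : 'cV[R]_k :=
  (Num.sqrt (S i i))^-1 *: (S *m delta_mx i 0).

Lemma pivot_outerE S i a b : 0 < S i i ->
  (pivot_col S i *m (pivot_col S i)^T) a b = S a i * S b i / S i i.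
Proof.
move=> Sii_gt0; have wE c : pivot_col S i c 0 = (Num.sqrt (S i i))^-1 * S c i.
  by rewrite mxE -colE mxE.
rewrite mxE big_ord1 [_^T _ _]mxE !wE mulrACA -invfM -expr2 sqr_sqrtr ?ltW //.
by rewrite mulrC.
Qed.

(* Completing the square along [e_i]: this is one step of Cholesky elimination. *)
Lemma psdmx_sub_pivot S i : S^T = S -> psdmx S -> 0 < S i i ->
  psdmx (S - pivot_col S i *m (pivot_col S i)^T).
Proof.
move=> S_sym S_psd Sii_gt0 x; set w := pivot_col S i.
set c := mxdot (S *m delta_mx i 0) x.
have wx : mxdot x (w *m w^T *m x) = c ^+ 2 / S i i.
  rewrite -mulmxA trmx_mul_col mul_mx_scalar mxdotZr (mxdotC x) -expr2 /w mxdotZl.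
  by rewrite exprMn exprVn sqr_sqrtr ?ltW // mulrC.
have cE : mxdot (delta_mx i 0) (S *m x) = c by rewrite /c mxdot_mulmxl S_sym.
have := S_psd (x - (c / S i i) *: delta_mx i 0).
rewrite mulmxBr -scalemxAr !mxdotBl !mxdotBr !mxdotZl !mxdotZr cE mxdot_delta_mulmx.
rewrite (mxdotC x (S *m delta_mx i 0)) -/c mulmxBl mxdotBr wx.
set B := mxdot x (S *m x) => psd_x.
suff <- : B - c / S i i * c - (c / S i i * c - c / S i i * (c / S i i * S i i))
    = B - c ^+ 2 / S i i by [].
by field; rewrite gt_eqF.
Qed.

Lemma psdmx_outer_sum_rows d S : S^T = S -> psdmx S ->
  (forall a b : 'I_k, (d <= a)%N -> S a b = 0) ->
  exists ws : seq 'cV[R]_k, S = \sum_(w <- ws) w *m w^T.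
Proof.
elim: d S => [|d IH] S S_sym S_psd S_rows.
  by exists [::]; rewrite big_nil; apply/matrixP => a b; rewrite mxE S_rows.
have [kd|dk] := leqP k d.
  by apply: IH => // a b da; have := ltn_ord a; rewrite ltnNge (leq_trans kd da).
set i := Ordinal dk.
have rows_split (a : 'I_k) : (d <= a)%N -> a = i \/ (d < a)%N.
  move=> da; have [->|ai] := eqVneq a i; [by left | right].
  rewrite ltn_neqAle da andbT; apply/eqP => da'.
  by move: ai; rewrite -val_eqE /= -da' eqxx.
have S_symE a b : S a b = S b a by rewrite -[in LHS]S_sym mxE.
have [Sii0|Sii_neq0] := eqVneq (S i i) 0.
  apply: IH => // a b /rows_split [->|da]; last exact: S_rows.
  have /eqP := psdmx_diag0 b S_psd Sii0.
  by rewrite -(S_symE i b) -mulr2n mulrn_eq0 => /eqP.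
have Sii_gt0 : 0 < S i i.
  by rewrite lt_neqAle eq_sym Sii_neq0 -(mxdot_delta_mulmx S i i) S_psd.
set w := pivot_col S i.
have [ws Sw] : exists ws : seq 'cV[R]_k, S - w *m w^T = \sum_(w <- ws) w *m w^T.
  apply: IH; first by rewrite linearB /= trmx_mul trmxK S_sym.
    exact: psdmx_sub_pivot.
  move=> a b /rows_split [->|da]; rewrite mxE [X in _ + X]mxE.
    by rewrite pivot_outerE // (S_symE b i) mulrAC divff ?mul1r ?subrr.
  by rewrite pivot_outerE // (S_rows a b da) (S_rows a i da) !mul0r subr0.
by exists (w :: ws); rewrite big_cons -Sw addrC subrK.
Qed.

Lemma psdmx_outer_sum S : S^T = S -> psdmx S ->
  exists ws : seq 'cV[R]_k, S = \sum_(w <- ws) w *m w^T.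
Proof.
move=> S_sym S_psd; apply: (@psdmx_outer_sum_rows k) => // a b.
by rewrite leqNgt ltn_ord.
Qed.

End PsdOuterSum.

Section PolarFactor.
Variable R : realType.
Implicit Types m n : nat.

Definition contractive m n (P : 'M[R]_(m, n)) :=
  forall x : 'cV[R]_n, mxdot (P *m x) (P *m x) <= mxdot x x.

Lemma contractive_trmx m n (P : 'M[R]_(m, n)) : contractive P -> contractive P^T.
Proof.
move=> P_contr y; set z := P^T *m y.
have zzE : mxdot z z = mxdot y (P *m z) by rewrite {1}/z mxdot_mulmxl trmxK.
have := mxdot_cauchy_schwarz y (P *m z); rewrite -zzE.
have := P_contr z; have := mxdot_ge0 z; have := mxdot_ge0 y.
generalize (mxdot z z) (mxdot y y) (mxdot (P *m z) (P *m z)) => a b c; nra.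
Qed.

Lemma semi_orth_contractive m n (O : 'M[R]_(m, n)) : semi_orth O -> contractive O.
Proof.
case=> OO; last by move=> x; rewrite mxdot_mulmxl mulmxA OO mul1mx.
rewrite -(trmxK O); apply: contractive_trmx => y.
by rewrite mxdot_mulmxl trmxK mulmxA OO mul1mx.
Qed.

Lemma mxdot_outer_contractive m n (P O : 'M[R]_(m, n)) (w : 'cV[R]_m) :
  O *m O^T = 1%:M -> contractive P ->
  mxdot P (w *m w^T *m O) <= mxdot O (w *m w^T *m O).
Proof.
move=> OO P_contr; set z := O^T *m w.
have wwO : w *m w^T *m O = w *m z^T by rewrite -mulmxA trmx_mul trmxK.
rewrite wwO !mxdot_outer {2}/z mulmxA OO mul1mx; apply: mxdot_le_of_norm_le.
by apply: le_trans (P_contr _) _; rewrite mxdot_mulmxl trmxK mulmxA OO mul1mx.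
Qed.

(* Testing maximality against [Q O] and [O Q], [Q] orthogonal, makes [O G^T]
   symmetric positive semidefinite and gives [G = O G^T O]. *)
Lemma orth_max_contractive m n (O G : 'M[R]_(m, n)) : O *m O^T = 1%:M ->
  (forall O' : 'M[R]_(m, n), O' *m O'^T = 1%:M -> mxdot O' G <= mxdot O G) ->
  forall P : 'M[R]_(m, n), contractive P -> mxdot P G <= mxdot O G.
Proof.
move=> OO O_max P P_contr; set X := O *m G^T.
have X_max (Q : 'M[R]_m) : Q *m Q^T = 1%:M -> \tr (Q *m X) <= \tr X.
  move=> QQ; rewrite mulmxA -!mxdotE; apply: O_max.
  by rewrite trmx_mul mulmxA -(mulmxA Q) OO mulmx1.
have Y_max (Q : 'M[R]_n) : Q *m Q^T = 1%:M -> \tr (Q *m (G^T *m O)) <= \tr (G^T *m O).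
  move=> QQ; rewrite mulmxA mxtrace_mulC mulmxA -mxdotE mxtrace_mulC -mxdotE.
  by apply: O_max; rewrite trmx_mul mulmxA -(mulmxA O) QQ mulmx1.
have GE : G = X *m O.
  by rewrite -mulmxA -(trace_max_sym Y_max) trmx_mul trmxK mulmxA OO mul1mx.
rewrite GE; have [ws ->] := psdmx_outer_sum (trace_max_sym X_max) (trace_max_psd X_max).
elim: ws => [|w ws IH].
  by rewrite big_nil mul0mx !mxdot0r.
rewrite big_cons mulmxDl !mxdotDr; apply: lerD IH.
exact: mxdot_outer_contractive.
Qed.

End PolarFactor.

Section SpectralNuclear.
Variable R : realType.
Implicit Types m n : nat.

Lemma frob_mulmx_le m n (A : 'M[R]_(m, n)) (x : 'cV[R]_n) :
  mxdot (A *m x) (A *m x) <= mxdot A A * mxdot x x.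
Proof.
have rowE (B : 'M[R]_(m, n)) i : mxdot (row i B)^T (row i B)^T = \sum_j B i j * B i j.
  by apply: eq_bigr => j _; rewrite big_ord1 !mxE.
rewrite mxdot_col_sqr mulr_suml; apply: ler_sum => i _; rewrite -rowE.
have -> : (A *m x) i 0 = mxdot (row i A)^T x.
  by rewrite mxE; apply: eq_bigr => j _; rewrite big_ord1 !mxE.
exact: mxdot_cauchy_schwarz.
Qed.

Lemma spec_norm_has_ub m n (A : 'M[R]_(m, n)) :
  has_ubound [set frob (A *m x) | x in [set x : 'cV[R]_n | frob x = 1]].
Proof.
exists (frob A) => _ [x /= x1 <-]; rewrite frob_le ?frob_ge0 // frob_sqr.
by have := frob_mulmx_le A x; rewrite -(frob_sqr x) x1 expr1n mulr1.
Qed.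

Lemma spec_norm_contractive m n (P : 'M[R]_(m, n)) : spec_norm P <= 1 -> contractive P.
Proof.
move=> P_le1 x; have [/mxdot_eq0 ->|xx_neq0] := eqVneq (mxdot x x) 0.
  by rewrite mulmx0 !mxdot0r.
have xx_gt0 : 0 < mxdot x x by rewrite lt_neqAle eq_sym xx_neq0 mxdot_ge0.
have fx_gt0 : 0 < frob x by rewrite frobE sqrtr_gt0.
set y := (frob x)^-1 *: x.
have y1 : frob y = 1.
  by rewrite frobE mxdotZl mxdotZr mulrA -expr2 exprVn frob_sqr mulVf ?sqrtr1.
have : frob (P *m y) <= 1.
  by apply: le_trans P_le1; apply: ub_le_sup; [exact: spec_norm_has_ub | exists y].
rewrite frob_le // expr1n -scalemxAr mxdotZl mxdotZr mulrA -expr2 exprVn frob_sqr.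
by rewrite mulrC ler_pdivrMr // mul1r.
Qed.

Lemma spec_norm_le m n (A : 'M[R]_(m, n)) s : (0 < n)%N -> 0 <= s ->
  (forall x : 'cV[R]_n, mxdot (A *m x) (A *m x) <= s ^+ 2 * mxdot x x) ->
  spec_norm A <= s.
Proof.
move=> n_gt0 s_ge0 A_le; apply: ge_sup.
  set e : 'cV[R]_n := delta_mx (Ordinal n_gt0) 0.
  by exists (frob (A *m e)), e => //=; rewrite frobE mxdot_delta2 eqxx sqrtr1.
move=> _ [x /= x1 <-]; rewrite frob_le //.
by have := A_le x; rewrite -(frob_sqr x) x1 expr1n mulr1.
Qed.

Lemma spec_norm_scale_semi_orth m n (O : 'M[R]_(m, n)) s :
  (0 < n)%N -> semi_orth O -> spec_norm (s *: O) <= `|s|.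
Proof.
move=> n_gt0 orthO; apply: spec_norm_le => // x.
rewrite -scalemxAl mxdotZl mxdotZr mulrA -expr2 real_normK ?num_real //.
by rewrite ler_wpM2l ?sqr_ge0 //; exact: semi_orth_contractive.
Qed.

Lemma spec_norm0_le0 m n : (0 < n)%N -> spec_norm (0 : 'M[R]_(m, n)) <= 0.
Proof.
by move=> n_gt0; apply: spec_norm_le => // x; rewrite mul0mx mxdot0l expr0n mul0r.
Qed.

Lemma nuc_norm_has_ub m n (A : 'M[R]_(m, n)) :
  has_ubound [set mxdot O A | O in [set O : 'M[R]_(m, n) | spec_norm O <= 1]].
Proof.
exists ((n%:R + mxdot A A) / 2) => _ [Q /= Q_le1 <-].
have QQ_le : mxdot Q Q <= n%:R.
  have -> : mxdot Q Q = \sum_(j < n) mxdot (col j Q) (col j Q).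
    rewrite /mxdot exchange_big; apply: eq_bigr => j _.
    by apply: eq_bigr => i _; rewrite big_ord1 !mxE.
  rewrite -[X in X%:R]card_ord -sumr_const; apply: ler_sum => j _.
  by have := spec_norm_contractive Q_le1 (delta_mx j 0); rewrite -colE mxdot_delta2 eqxx.
have := mxdot_ge0 (Q - A); rewrite !(mxdotBl, mxdotBr) (mxdotC A Q) => QA_ge0.
rewrite ler_pdivlMr //; lra.
Qed.

Lemma mxdot_le_nuc_norm m n (A P : 'M[R]_(m, n)) :
  spec_norm P <= 1 -> mxdot P A <= nuc_norm A.
Proof. by move=> P_le1; apply: ub_le_sup; [exact: nuc_norm_has_ub | exists P]. Qed.

Lemma nuc_norm_le m n (A : 'M[R]_(m, n)) c : (0 < n)%N ->
  (forall P : 'M[R]_(m, n), spec_norm P <= 1 -> mxdot P A <= c) -> nuc_norm A <= c.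
Proof.
move=> n_gt0 A_le; apply: ge_sup; last by move=> _ [P /= P_le1 <-]; exact: A_le.
by exists (mxdot 0 A), 0 => //=; rewrite (le_trans (spec_norm0_le0 _ n_gt0)).
Qed.

Lemma nuc_norm_ge0 m n (A : 'M[R]_(m, n)) : (0 < n)%N -> 0 <= nuc_norm A.
Proof.
move=> n_gt0; rewrite -(mxdot0l A).
by apply: mxdot_le_nuc_norm; rewrite (le_trans (spec_norm0_le0 _ n_gt0)).
Qed.

(* [||O - G||_F^2 = ||O||_F^2 - 2 <O, G> + ||G||_F^2] and [||O||_F] is the same for
   all semi-orthogonal [O] of a given shape, so [Orth(G)] maximizes [<O, G>]. *)
Lemma nuc_norm_le_orth m n (G O : 'M[R]_(m, n)) : (0 < n)%N ->
  is_orth G O -> nuc_norm G <= mxdot O G.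
Proof.
move=> n_gt0 [orthO minO].
have maxO O' : semi_orth O' -> mxdot O O = mxdot O' O' -> mxdot O' G <= mxdot O G.
  move=> orthO' OO'; have := minO O' orthO'.
  rewrite !frobE ler_sqrt ?mxdot_ge0 // !(mxdotBl, mxdotBr) OO' (mxdotC G O) (mxdotC G O').
  by move=> ?; lra.
apply: nuc_norm_le => // P /spec_norm_contractive P_contr.
case: orthO => OO.
  apply: (orth_max_contractive OO) P_contr => O' O'O'.
  by apply: maxO; [left | rewrite !mxdotE O'O' OO].
rewrite -(mxdot_trmx P) -(mxdot_trmx O); apply: orth_max_contractive.
- by rewrite trmxK.
- move=> W WW; rewrite -[W]trmxK !mxdot_trmx.
  apply: maxO; [by right; rewrite trmxK|].
  by rewrite !mxdotE mxtrace_mulC OO trmxK mxtrace_mulC WW.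
- exact: contractive_trmx.
Qed.

End SpectralNuclear.

Section Descent.
Variables (R : realType) (m n : nat).
Implicit Types (f : 'M[R]_(m, n) -> R) (X H : 'M[R]_(m, n)).

Lemma mxdot_grad f X H : differentiable f X -> mxdot (grad f X) H = 'D_H f X.
Proof.
move=> f_diff; rewrite deriveE // {2}(matrix_sum_delta H) linear_sum /mxdot.
apply: eq_bigr => i _; rewrite linear_sum; apply: eq_bigr => j _.
by rewrite linearZ /= mxE deriveE // mulrC.
Qed.

Lemma is_derive_line f X H c : differentiable f (X + c *: H) ->
  is_derive c 1 (fun s : R => f (X + s *: H)) ('D_H f (X + c *: H)).
Proof.
move=> f_diff; set phi := fun s : R => f (X + s *: H).
have phiE : (fun h : R => h^-1 *: ((phi \o shift c) (h *: 1) - phi c)) =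
    (fun h : R => h^-1 *: ((f \o shift (X + c *: H)) (h *: H) - f (X + c *: H))).
  apply/funext => h /=; congr (_ *: (f _ - _)).
  rewrite /shift /= (_ : h%:A = h); last by rewrite -[RHS]mulr1.
  by rewrite scalerDl addrCA addrC.
split; first by rewrite /derivable phiE; exact: diff_derivable.
by rewrite /derive phiE.
Qed.

Lemma mvt_grad f X H : (forall Y, differentiable f Y) ->
  exists2 c : R, 0 < c < 1 & f (X + H) - f X = mxdot (grad f (X + c *: H)) H.
Proof.
move=> f_diff; have line_der s := @is_derive_line f X H s (f_diff _).
have [c] := MVT ltr01 (fun s _ => line_der s)
  (derivable_within_continuous (fun s _ => @ex_derive _ _ _ _ _ _ _ (line_der s))).
rewrite in_itv /= scale1r scale0r addr0 subr0 mulr1 => c01 fE.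
by exists c => //; rewrite mxdot_grad.
Qed.

Lemma descent_semi_orth f Lc a X O : (0 < n)%N ->
  (forall Y, differentiable f Y) -> 0 <= Lc ->
  (forall Y Z, nuc_norm (grad f Y - grad f Z) <= Lc * spec_norm (Y - Z)) ->
  0 <= a -> semi_orth O ->
  f (X - a *: O) <= f X - a * mxdot O (grad f X) + Lc * a ^+ 2.
Proof.
move=> n_gt0 f_diff Lc_ge0 grad_lip a_ge0 orthO.
have [c /andP[c_gt0 c_lt1]] := mvt_grad X (- (a *: O)) f_diff.
set D := grad f (X + c *: - (a *: O)) - grad f X.
rewrite -[grad f _](subrK (grad f X)) -/D mxdotDl !mxdotNr !mxdotZr.
have -> : mxdot D O = - mxdot (- O) D by rewrite mxdotNl opprK mxdotC.
rewrite (mxdotC (grad f X)).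
have D_le : mxdot (- O) D <= Lc * (c * a).
  apply: le_trans (mxdot_le_nuc_norm D _) _.
    by rewrite -scaleN1r (le_trans (spec_norm_scale_semi_orth _ _ _)) ?normrN1.
  apply: le_trans (grad_lip _ _) _; rewrite addrC addKr scalerN scalerA -scaleNr.
  rewrite ler_wpM2l // (le_trans (spec_norm_scale_semi_orth _ _ _)) //.
  by rewrite normrN ger0_norm ?mulr_ge0 // ltW.
have aD_le : a * mxdot (- O) D <= Lc * a ^+ 2.
  apply: le_trans (ler_wpM2l a_ge0 D_le) _.
  have -> : a * (Lc * (c * a)) = Lc * a ^+ 2 * c by ring.
  by rewrite ler_piMr ?mulr_ge0 ?sqr_ge0 // ltW.
move=> fE; lra.
Qed.

End Descent.

Section StepsizeSums.
Variable R : realType.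

Lemma sqr_max_le (x y : R) : Num.max x y ^+ 2 <= x ^+ 2 + y ^+ 2.
Proof. by rewrite maxEle; case: ifP => _; rewrite ?lerDr ?lerDl sqr_ge0. Qed.

(* [1 - y <= - ln y] for [y = s_t / s_(t+1)], then telescope. *)
Lemma sum_one_sub_ratio_le_ln (s : nat -> R) : (forall t, 0 < s t) ->
  forall T, \sum_(t < T) (1 - s t / s t.+1) <= ln (s T) - ln (s 0%N).
Proof.
move=> s_gt0 T; rewrite -(telescope_sumr (fun t => ln (s t)) (leq0n T)) big_mkord.
apply: ler_sum => t _; set y := s t / s t.+1.
have y_gt0 : 0 < y by rewrite divr_gt0.
have : ln y <= y - 1 by have := @le_ln1Dx R (y - 1); rewrite (addrC 1) subrK; apply; lra.
by rewrite /y ln_div ?posrE // => ?; lra.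
Qed.

Lemma eventually_powRN2_ln_le1 (q K : R) : 0 < q -> 0 < K ->
  exists T0 : nat, (0 < T0)%N /\
  forall T : nat, (T0 <= T)%N -> (T%:R `^ (- q)) ^+ 2 * ln (T%:R * K) <= 1.
Proof.
move=> q_gt0 K_gt0; set N := K `^ q / q.
have N_ge0 : 0 <= N by rewrite divr_ge0 ?powR_ge0 // ltW.
exists (Num.truncn (N `^ q^-1)).+1; split => // T T0T.
have NT : N `^ q^-1 < T%:R.
  by apply: lt_le_trans (truncnS_gt _) _; rewrite ler_nat.
have T_gt0 : 0 < T%:R :> R by apply: le_lt_trans NT; exact: powR_ge0.
set z := T%:R `^ q; have z_gt0 : 0 < z by rewrite powR_gt0.
have Nz : N <= z.
  have := @ge0_ler_powR R q (ltW q_gt0) _ _ (powR_ge0 _ _) (ltW T_gt0) (ltW NT).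
  by rewrite -powRrM mulVf ?gt_eqF // powRr1.
have TK_gt0 : 0 < T%:R * K by rewrite mulr_gt0.
(* [ln x = ln (x ^ q) / q < x ^ q / q] *)
have ln_le : ln (T%:R * K) <= z * K `^ q / q.
  have := ln_sublinear (powR_gt0 q TK_gt0).
  rewrite ln_powR (powRM _ (ltW T_gt0) (ltW K_gt0)) -/z => /ltW.
  by rewrite ler_pdivlMr // mulrC.
rewrite powRN -/z; apply: le_trans (ler_wpM2l (sqr_ge0 _) ln_le) _.
have -> : z^-1 ^+ 2 * (z * K `^ q / q) = N / z by rewrite /N; field; rewrite !gt_eqF.
by rewrite ler_pdivrMr // mul1r.
Qed.

End StepsizeSums.

Section AdaGOFullBatch.
Variables (R : realType) (m n : nat) (f : 'M[R]_(m, n) -> R).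
Variables (Lc eta gamma eps v0 : R) (Theta0 : 'M[R]_(m, n)).
Variables (Theta M O : nat -> 'M[R]_(m, n)) (v : nat -> R).
Hypotheses (n_gt0 : (0 < n)%N) (f_diff : forall X, differentiable f X).
Hypotheses (Lc_ge0 : 0 <= Lc)
  (grad_lip : forall X Y, nuc_norm (grad f X - grad f Y) <= Lc * spec_norm (X - Y)).
Hypotheses (gamma_ge0 : 0 <= gamma) (eps_gt0 : 0 < eps).
Hypotheses (v0_gt0 : 0 < v0) (run : adago_run f eta 0 gamma eps Theta0 v0 Theta M O v).

Let G t := grad f (Theta t).
Let d t := Num.min (frob (G t) ^+ 2) (gamma ^+ 2).
Let alpha t := Num.max eps (eta * Num.min (frob (G t)) gamma / v t.+1).

Lemma adago_v_sqrS t : v t.+1 ^+ 2 = v t ^+ 2 + d t.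
Proof.
have [_ _ _ /(_ t) [_ -> _ _]] := run.
by rewrite sqr_sqrtr // addr_ge0 ?le_min ?sqr_ge0.
Qed.

Lemma adago_v_gt0 t : 0 < v t.
Proof.
have [_ _ v0E runS] := run; elim: t => [|t IH]; first by rewrite v0E.
have [_ -> _ _] := runS t; rewrite sqrtr_gt0.
by apply: ltr_wpDr; rewrite ?le_min ?sqr_ge0 ?exprn_gt0.
Qed.

Lemma adago_v_sqr_le T : v T ^+ 2 <= v0 ^+ 2 + T%:R * gamma ^+ 2.
Proof.
have [_ _ v0E _] := run; elim: T => [|T IH]; first by rewrite v0E mul0r addr0.
by rewrite adago_v_sqrS -natr1 mulrDl mul1r addrA lerD // ge_min lexx orbT.
Qed.

Lemma adago_alpha_ge t : eps <= alpha t.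
Proof. by rewrite le_max lexx. Qed.

Lemma adago_descent t :
  f (Theta t.+1) <= f (Theta t) - alpha t * nuc_norm (G t) + Lc * alpha t ^+ 2.
Proof.
have [_ _ _ /(_ t) [MtE _ orthO ThetaE]] := run.
rewrite MtE scale0r add0r subr0 scale1r in orthO.
have alpha_ge0 : 0 <= alpha t := le_trans (ltW eps_gt0) (adago_alpha_ge t).
rewrite ThetaE.
apply: le_trans (descent_semi_orth _ n_gt0 f_diff Lc_ge0 grad_lip alpha_ge0 orthO.1) _.
by rewrite lerD2r lerD2l lerN2 ler_wpM2l // nuc_norm_le_orth.
Qed.

Lemma adago_sum_nuc_norm_le N : eps * \sum_(t < N) nuc_norm (G t) <=
  f Theta0 - f (Theta N) + Lc * \sum_(t < N) alpha t ^+ 2.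
Proof.
have [init_eq _ _ _] := run; elim: N => [|N IH].
  by rewrite !big_ord0 init_eq !mulr0 subrr addr0.
rewrite !big_ord_recr /= !mulrDr.
have := ler_wpM2r (nuc_norm_ge0 (G N) n_gt0) (adago_alpha_ge N).
have := adago_descent N; lra.
Qed.

Lemma adago_alpha_sqr_le t : alpha t ^+ 2 <= eps ^+ 2 + eta ^+ 2 * (d t / v t.+1 ^+ 2).
Proof.
apply: le_trans (sqr_max_le _ _) _.
rewrite lerD2l expr_div_n exprMn -mulrA ler_wpM2l ?sqr_ge0 //.
rewrite ler_pM2r ?invr_gt0 ?exprn_gt0 ?adago_v_gt0 // le_min.
by apply/andP; split; rewrite ler_sqr ?nnegrE ?le_min ?frob_ge0 // ge_min lexx ?orbT.
Qed.

Lemma adago_sum_alpha_sqr_le T : (0 < T)%N ->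
  \sum_(t < T) alpha t ^+ 2 <=
  T%:R * eps ^+ 2 + eta ^+ 2 * ln (T%:R * (1 + gamma ^+ 2 / v0 ^+ 2)).
Proof.
move=> T_gt0.
apply: (@le_trans _ _ (\sum_(t < T) (eps ^+ 2 + eta ^+ 2 * (d t / v t.+1 ^+ 2)))).
  by apply: ler_sum => t _; exact: adago_alpha_sqr_le.
rewrite big_split /= sumr_const card_ord -[_ *+ T]mulr_natl -mulr_sumr lerD2l.
rewrite ler_wpM2l ?sqr_ge0 //.
have v_sqr_gt0 t : 0 < v t ^+ 2 by rewrite exprn_gt0 ?adago_v_gt0.
have dE t : d t / v t.+1 ^+ 2 = 1 - v t ^+ 2 / v t.+1 ^+ 2.
  have -> : d t = v t.+1 ^+ 2 - v t ^+ 2 by rewrite adago_v_sqrS addrAC subrr add0r.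
  by rewrite mulrBl divff ?gt_eqF.
under eq_bigr do rewrite dE.
apply: le_trans (sum_one_sub_ratio_le_ln v_sqr_gt0 T) _.
have [_ _ v0E _] := run; rewrite -ln_div ?posrE ?v_sqr_gt0 ?adago_v_gt0 // v0E.
have K_gt0 : 0 < 1 + gamma ^+ 2 / v0 ^+ 2.
  by rewrite ltr_pwDl ?divr_ge0 ?sqr_ge0.
rewrite ler_ln ?posrE ?divr_gt0 ?mulr_gt0 ?exprn_gt0 ?adago_v_gt0 ?ltr0n //.
rewrite ler_pdivrMr ?exprn_gt0 //; apply: le_trans (adago_v_sqr_le T) _.
rewrite mulrDr mulr1 mulrDl -mulrA divfK ?sqrf_eq0 ?gt_eqF // lerD2r.
by rewrite ler_peMl ?sqr_ge0 // ler1n.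
Qed.

Lemma adago_nuc_norm_sum_le T : (0 < T)%N ->
  eps * \sum_(t < T) nuc_norm (grad f (Theta t)) <=
  f Theta0 - f (Theta T) +
  Lc * (T%:R * eps ^+ 2 + eta ^+ 2 * ln (T%:R * (1 + gamma ^+ 2 / v0 ^+ 2))).
Proof.
move=> T_gt0; apply: le_trans (adago_sum_nuc_norm_le T) _.
by rewrite lerD2l ler_wpM2l // adago_sum_alpha_sqr_le.
Qed.

End AdaGOFullBatch.

Unset Implicit Arguments.

Theorem theorem2 (R : realType) :
  exists C : R, 0 < C /\
  forall (m n : nat) (f : 'M[R]_(m, n) -> R) (Lc gamma v0 q : R)
         (Theta0 Thetastar : 'M[R]_(m, n)),
    (0 < m)%N -> (0 < n)%N ->
    (forall X, differentiable f X) ->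
    (forall X, f Thetastar <= f X) ->
    0 < Lc ->
    (forall X Y, nuc_norm (grad f X - grad f Y) <= Lc * spec_norm (X - Y)) ->
    0 < gamma -> 0 < v0 -> 0 < q ->
    exists T0 : nat, forall (T : nat), (T0 <= T)%N ->
      forall (Theta M O : nat -> 'M[R]_(m, n)) (v : nat -> R),
        adago_run f (T%:R `^ (- q)) 0 gamma (T%:R `^ (- 2^-1)) Theta0 v0
                  Theta M O v ->
        T%:R^-1 * \sum_(t < T) nuc_norm (grad f (Theta t))
          <= C * (f Theta0 - f Thetastar + Lc) / Num.sqrt T%:R.
Proof.
exists 2; split => // m n f Lc gamma v0 q Theta0 Thetastar _ n_gt0 f_diff f_min
  Lc_gt0 grad_lip gamma_gt0 v0_gt0 q_gt0.
have K_gt0 : 0 < 1 + gamma ^+ 2 / v0 ^+ 2 by rewrite ltr_pwDl ?divr_ge0 ?sqr_ge0.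
have [T0 [T0_gt0 ln_le1]] := eventually_powRN2_ln_le1 q_gt0 K_gt0.
exists T0 => T T0T Theta M O v run; have T_gt0 := leq_trans T0_gt0 T0T.
have T_R_gt0 : 0 < T%:R :> R by rewrite ltr0n.
have sT_gt0 : 0 < Num.sqrt T%:R :> R by rewrite sqrtr_gt0.
have epsE : T%:R `^ (- 2^-1) = (Num.sqrt T%:R)^-1 :> R.
  by rewrite powRN powR12_sqrt ?ler0n.
have := adago_nuc_norm_sum_le n_gt0 f_diff (ltW Lc_gt0) grad_lip (ltW gamma_gt0)
  (powR_gt0 _ T_R_gt0) v0_gt0 run T_gt0.
have T_eps2 : T%:R * (T%:R `^ (- 2^-1)) ^+ 2 = 1 :> R.
  by rewrite epsE exprVn sqr_sqrtr ?ler0n // mulfV // pnatr_eq0 -lt0n.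
rewrite T_eps2 mulrDr mulr1 epsE => sum_le.
have := ler_piMr (ltW Lc_gt0) (ln_le1 T T0T); have := f_min (Theta T).
have := f_min Theta0 => Delta_ge0 fT_ge fT_le.
have -> : T%:R^-1 = (Num.sqrt T%:R)^-1 * (Num.sqrt T%:R)^-1 :> R.
  by rewrite -invfM -expr2 sqr_sqrtr ?ler0n.
rewrite -[X in X <= _]mulrA [X in _ <= X]mulrC ler_pM2l ?invr_gt0 //; lra.
Qed.
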